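(* Let $0\le k_1\le k_2$ be integers and $m$ a positive integer, and suppose there exists a perfect $B[-k_1,k_2](m)$ set. Suppose also that $p$ is a prime and $a>0$ an integer with $p\mid m$ and $a\mid p-1$. Let $r$ be a positive integer with $\gcd(a(k_1+k_2),r)=1$ and $p\mid a(k_1+k_2)+r$. If $r\le a$ and $\lfloor k_1/p\rfloor+\lfloor k_2/p\rfloor=\lfloor (k_1+k_2)/p\rfloor$, then $a(k_1+k_2)+r \mid m$.
   Context: For a positive integer $q$, $\mathbb{Z}_q$ is the ring of integers modulo $q$. For integers $a\le b$, $[a,b]^\ast=\{a,a+1,\dots,b\}\setminus\{0\}$. For non-negative integers $0\le k_1\le k_2$ and a positive integer $q$, a set $B\subseteq\mathbb{Z}_q$ is a $B[-k_1,k_2](q)$ set (splitter set) if, for each $b\in B$, the set $\{ab \bmod q: a\in[-k_1,k_2]^\ast\}$ consists of $k_1+k_2$ distinct nonzero elements, and these sets are pairwise disjoint for distinct $b\in B$. Such a set is perfect if $|B|=(q-1)/(k_1+k_2)$; equivalently, every nonzero element of $\mathbb{Z}_q$ has a unique representation $ab$ with $a\in[-k_1,k_2]^\ast$, $b\in B$ (and $0$ has no such representation). *)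

From mathcomp Require Import all_boot all_order all_algebra.
Set Implicit Arguments. Unset Strict Implicit. Unset Printing Implicit Defensive.
Import Order.TTheory GRing.Theory Num.Theory.
Local Open Scope ring_scope.

(* Elements of Z_q are represented by the ordinals 'I_q (residues 0..q-1).
   [-k1,k2]^* : the nonzero integers a with -k1 <= a <= k2. *)
Definition multset (k1 k2 : nat) : seq int :=
  [seq a <- [seq (i%:Z - k1%:Z) | i <- iota 0 (k1 + k2).+1] | a != 0].

Definition mulmod (q : nat) (a : int) (b : 'I_q) : int := ((a * (b : nat)%:Z) %% q%:Z)%Z.

Definition splitter (k1 k2 q : nat) (B : {set 'I_q}) : Prop :=
  (forall b, b \in B ->
     uniq [seq mulmod a b | a <- multset k1 k2] /\
     (forall a, a \in multset k1 k2 -> mulmod a b != 0)) /\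
  (forall b b', b \in B -> b' \in B -> b != b' ->
     forall a a', a \in multset k1 k2 -> a' \in multset k1 k2 ->
       mulmod a b != mulmod a' b').

Definition perfect_splitter (k1 k2 q : nat) (B : {set 'I_q}) : Prop :=
  @splitter k1 k2 q B /\ (#|B| * (k1 + k2) = q - 1)%N.

From mathcomp Require Import all_boot all_order all_algebra.
From mathcomp Require Import zify ring.
Import Order.TTheory GRing.Theory Num.Theory.
Set Implicit Arguments. Unset Strict Implicit. Unset Printing Implicit Defensive.

(* Let B be a perfect B[-k1,k2](m) set, n = k1 + k2 and p a prime divisor of m.
   The lists of products  a*b mod m  (a in [-k1,k2]^*, b in B) together enumerate
   every nonzero residue 1..m-1 exactly once, so any property of residues can be
   counted either over 1..m-1 or block by block over B.  We count the multiples
   of p: there are (m-1)/p of them in 1..m-1; a block with p | b contributes n of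
   them and a block with p coprime to b contributes k1/p + k2/p = n/p of them.
   Writing g, g' for the numbers of both kinds of blocks we get
       (g + g') n = m - 1      and      g n + g' (n/p) = m/p - 1.
   The rest is arithmetic: with p = d a + 1 and r <= a, the hypothesis
   p | a n + r forces n mod p = r d, hence a n + r = p (a (n/p) + r); the two
   counting identities then give a (m/p) = g' (a (n/p) + r), and since
   a (n/p) + r is coprime to a it divides m/p, i.e. a n + r divides m. *)

Lemma multset_split (k1 k2 : nat) : multset k1 k2 =
  [seq (- Posz (k1 - i))%R | i <- iota 0 k1] ++ [seq Posz j.+1 | j <- iota 0 k2].
Proof.
rewrite /multset -addnS iotaD map_cat filter_cat add0n; congr (_ ++ _).
  transitivity [seq x <- [seq (- Posz (k1 - i))%R | i <- iota 0 k1] | x != 0%R].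
    congr filter; apply/eq_in_map => i; rewrite mem_iota add0n => /andP[_ ?].
    by apply/eqP; lia.
  apply/all_filterP/allP => x /mapP[i]; rewrite mem_iota add0n => /andP[_ ?] ->.
  by apply/eqP; lia.
rewrite /= subrr /= -[k1.+1]addn0 iotaDl -map_comp.
transitivity [seq x <- [seq Posz j.+1 | j <- iota 0 k2] | x != 0%R].
  by congr filter; apply: eq_map => j /=; apply/eqP; lia.
by apply/all_filterP/allP => x /mapP[j _ ->].
Qed.

Lemma size_multset (k1 k2 : nat) : size (multset k1 k2) = k1 + k2.
Proof. by rewrite multset_split size_cat !size_map !size_iota. Qed.

Lemma count_dvd_sub_iota (p k : nat) : 0 < p ->
  count (fun i => p %| k - i) (iota 0 k) = k %/ p.
Proof.
move=> p_gt0; elim: k => [|k IH]; first by rewrite div0n.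
rewrite -addn1 addnC iotaD /= add0n -add1n iotaDl count_map.
rewrite (eq_count (a2 := fun i => p %| k - i)); last first.
  by move=> i /=; rewrite add1n addnC addn1 subSS.
by rewrite IH subn0 add1n divnS.
Qed.

Lemma count_dvd_succ_iota (p k : nat) : 0 < p ->
  count (fun j => p %| j.+1) (iota 0 k) = k %/ p.
Proof.
move=> p_gt0; elim: k => [|k IH]; first by rewrite div0n.
by rewrite -addn1 iotaD count_cat IH /= add0n addn0 addn1 divnS // addnC.
Qed.

Lemma count_multset_dvd (p k1 k2 : nat) : 0 < p ->
  count (fun x : int => p %| `|x|%N) (multset k1 k2) = k1 %/ p + k2 %/ p.
Proof.
move=> p_gt0; rewrite multset_split count_cat !count_map.
rewrite (eq_count (a2 := fun i => p %| k1 - i)); last by move=> i /=; rewrite abszN.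
by rewrite count_dvd_sub_iota // count_dvd_succ_iota.
Qed.

(* For a prime p dividing m, reduction mod m preserves divisibility by p, so
   p divides x*b mod m iff p divides x or b. *)
Lemma dvdz_mulmod (m p : nat) (x : int) (b : 'I_m) : prime p -> p %| m ->
  (Posz p %| mulmod x b)%Z = (p %| `|x|%N) || (p %| b).
Proof.
move=> p_prime pm; rewrite /mulmod.
have pm_z : (Posz p %| Posz m)%Z by rewrite dvdzE.
set y := (x * Posz b)%R.
rewrite -(rpredDl (y %% Posz m)%Z (dvdz_mull (y %/ Posz m)%Z pm_z)) -divz_eq.
by rewrite dvdzE abszM Euclid_dvdM.
Qed.

Lemma uniq_flatten_map (I T : eqType) (f : I -> seq T) (s : seq I) :
  uniq s -> {in s, forall i, uniq (f i)} ->
  {in s &, forall i j, i != j -> forall x, x \in f i -> x \notin f j} ->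
  uniq (flatten [seq f i | i <- s]).
Proof.
elim: s => [|i s IH] //= /andP[i_s s_uniq] f_uniq f_disj.
rewrite cat_uniq f_uniq ?mem_head // IH //; last 2 first.
- by move=> j js; apply: f_uniq; rewrite inE js orbT.
- by move=> j k js ks; apply: f_disj; rewrite inE ?js ?ks orbT.
rewrite andbT; apply/hasPn => x /flattenP[_ /mapP[j js ->] xj].
apply: f_disj xj; rewrite ?inE ?js ?eqxx ?orbT //.
by apply: contraNneq i_s => <-.
Qed.

Definition products (k1 k2 q : nat) (b : 'I_q) : seq int :=
  [seq mulmod x b | x <- multset k1 k2].

Section PerfectSplitter.
Variables (k1 k2 m : nat) (B : {set 'I_m}).
Hypothesis B_perfect : perfect_splitter k1 k2 B.

Let all_products := flatten [seq products k1 k2 b | b <- enum B].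

(* Distinct multipliers give distinct residues within a block, and distinct
   blocks are disjoint, so no residue is listed twice. *)
Lemma all_products_uniq : uniq all_products.
Proof.
have [[B_uniq B_disj] _] := B_perfect.
apply: uniq_flatten_map => [|b|b b']; rewrite ?mem_enum; first exact: enum_uniq.
  by move=> /B_uniq[].
move=> bB b'B bb' _ /mapP[x x_mult ->]; apply/mapP => -[x' x'_mult].
by apply/eqP; apply: B_disj.
Qed.

Lemma all_products_range :
  {subset all_products <= [seq Posz i | i <- iota 1 m.-1]}.
Proof.
have [[B_uniq _] _] := B_perfect.
move=> _ /flattenP[_ /mapP[b bB ->] /mapP[x x_mult ->]].
rewrite mem_enum in bB; have [_ /(_ x x_mult) nz] := B_uniq b bB.
have m_gt0 : 0 < m by apply: leq_ltn_trans (ltn_ord b).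
have lt_m : (mulmod x b < Posz m)%R by rewrite /mulmod ltz_pmod.
have : (0 <= mulmod x b)%R by rewrite /mulmod modz_ge0 // lt0n_neq0.
move: nz lt_m; case: (mulmod x b) => // y y_neq0 y_lt _.
apply/mapP; exists y => //; rewrite mem_iota; rewrite ltz_nat in y_lt.
have : y != 0 by apply: contra y_neq0 => /eqP ->.
lia.
Qed.

(* Perfectness: there are exactly m - 1 listed residues, so the blocks of B
   enumerate the nonzero residues 1, ..., m-1, each exactly once. *)
Lemma all_products_perm : perm_eq all_products [seq Posz i | i <- iota 1 m.-1].
Proof.
have [_ B_card] := B_perfect.
have size_all : size all_products = m.-1.
  rewrite size_flatten /shape -map_comp sumnE big_map big_enum /=.
  under eq_bigr => b _ do rewrite size_map size_multset.
  by rewrite sum_nat_const B_card subn1.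
have size_le : size [seq Posz i | i <- iota 1 m.-1] <= size all_products.
  by rewrite size_map size_iota size_all.
apply: uniq_perm all_products_uniq _ (uniq_min_size _ _ size_le).2.
- by rewrite map_inj_uniq ?iota_uniq // => i j [].
- exact: all_products_uniq.
- exact: all_products_range.
Qed.

Lemma count_perfect_splitter (P : pred int) :
  count P [seq Posz i | i <- iota 1 m.-1] = \sum_(b in B) count P (products k1 k2 b).
Proof.
by rewrite -(permP all_products_perm) count_flatten -map_comp sumnE big_map big_enum.
Qed.

End PerfectSplitter.

Lemma count_products_dvd (k1 k2 m p : nat) (b : 'I_m) : prime p -> p %| m ->
  count (fun y => Posz p %| y)%Z (products k1 k2 b) =
  if p %| b then k1 + k2 else k1 %/ p + k2 %/ p.
Proof.
move=> p_prime pm; rewrite count_map.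
rewrite (eq_count (a2 := fun x => (p %| `|x|%N) || (p %| b))); last first.
  by move=> x /=; rewrite dvdz_mulmod.
case: (p %| b).
  by rewrite (eq_count (a2 := predT)) ?count_predT ?size_multset // => x; rewrite orbT.
rewrite (eq_count (a2 := fun x : int => p %| `|x|%N)) => [|x]; last by rewrite orbF.
by rewrite count_multset_dvd ?prime_gt0.
Qed.

Lemma count_multiples_iota (p N : nat) : 0 < p ->
  count (fun y => Posz p %| y)%Z [seq Posz i | i <- iota 1 N] = N %/ p.
Proof.
move=> p_gt0; rewrite -(count_dvd_succ_iota N p_gt0) -[1]addn0 iotaDl.
by rewrite -map_comp count_map; apply: eq_count => j /=; rewrite dvdzE add1n.
Qed.

Lemma sum_if_nat (I : finType) (A : {pred I}) (P : pred I) (x y : nat) :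
  \sum_(i in A) (if P i then x else y) =
  (\sum_(i in A) P i) * x + (\sum_(i in A) ~~ P i) * y.
Proof.
rewrite !big_distrl -big_split; apply: eq_bigr => i _.
by case: (P i); rewrite /= ?mul1n ?mul0n ?addn0.
Qed.

Lemma sum_predC_card (I : finType) (A : {pred I}) (P : pred I) :
  \sum_(i in A) P i + \sum_(i in A) ~~ P i = #|A|.
Proof. by rewrite -big_split -sum1_card; apply: eq_bigr => i _; case: (P i). Qed.

Section Arithmetic.
Variables (p a d : nat).
Hypothesis p_eq : p = d * a + 1.

(* Multiplying a n + r = 0 (mod p) by d gives n = r d (mod p), and r d < p. *)
Lemma residue_from_divisibility (n r : nat) :
  p %| a * n + r -> r <= a -> n %% p = r * d.
Proof.
case/dvdnP=> e an_r ra.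
have scaled : n + d * e * p = n * p + r * d.
  by rewrite -mulnA -an_r p_eq; ring.
have rd_lt : r * d < p by rewrite p_eq mulnC addn1 ltnS leq_mul2l ra orbT.
by rewrite -(modn_small rd_lt) -(modnMDl n (r * d)) -scaled addnC modnMDl.
Qed.

Lemma norm_factor (n r : nat) :
  p %| a * n + r -> r <= a -> a * n + r = p * (a * (n %/ p) + r).
Proof.
move=> pn ra; rewrite {1}(divn_eq n p) (residue_from_divisibility pn ra).
set c := n %/ p; rewrite p_eq; ring.
Qed.

Lemma quotient_relation (n r g g' q : nat) : 0 < d ->
  n %% p = r * d ->
  (g + g') * n + 1 = q * p -> g * n + g' * (n %/ p) + 1 = q ->
  a * q = g' * (a * (n %/ p) + r).
Proof.
move=> d_gt0 n_mod total multiples.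
set c := n %/ p in multiples *.
have n_eq : n = c * p + r * d by rewrite /c -n_mod -divn_eq.
have scaled : g' * r * d = a * (g * n + 1) * d.
  apply/eqP; rewrite -(eqn_add2r (g * n + g' * c * p + 1)); apply/eqP.
  have -> : g' * r * d + (g * n + g' * c * p + 1) = (g + g') * n + 1.
    by rewrite n_eq; ring.
  by rewrite total -multiples p_eq; ring.
have g'r : g' * r = a * (g * n + 1).
  by apply/eqP; rewrite -(eqn_pmul2r d_gt0) scaled.
by rewrite -multiples; nia.
Qed.

End Arithmetic.

Lemma divisor_from_counts (n m p a r g g' : nat) :
  1 < p -> 0 < m -> p %| m -> a %| p - 1 ->
  coprime (a * n) r -> p %| a * n + r -> r <= a ->
  (g + g') * n = m - 1 -> g * n + g' * (n %/ p) = m.-1 %/ p ->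
  a * n + r %| m.
Proof.
move=> p_gt1 m_gt0 /dvdnP[q m_eq] /dvdnP[d pd] cop pn ra total multiples.
have p_eq : p = d * a + 1 by lia.
have d_gt0 : 0 < d by lia.
have multiples_q : g * n + g' * (n %/ p) + 1 = q.
  rewrite multiples divn_pred m_eq dvdn_mull // mulnK; lia.
have total_q : (g + g') * n + 1 = q * p by lia.
have rel := quotient_relation p_eq d_gt0 (residue_from_divisibility p_eq pn ra)
              total_q multiples_q.
rewrite (norm_factor p_eq pn ra) m_eq mulnC dvdn_pmul2r; last lia.
have cop' : coprime (a * (n %/ p) + r) a.
  rewrite coprime_sym -coprime_modr mulnC modnMDl coprime_modr.
  by move: cop; rewrite coprimeMl => /andP[].
by rewrite -(Gauss_dvdr _ cop') rel dvdn_mull.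
Qed.

Theorem lemma3p4 (k1 k2 m p a r : nat) :
  (k1 <= k2)%N -> (0 < m)%N ->
  (exists B : {set 'I_m}, @perfect_splitter k1 k2 m B) ->
  prime p -> (0 < a)%N -> (p %| m)%N -> (a %| p - 1)%N ->
  (0 < r)%N -> coprime (a * (k1 + k2)) r -> (p %| a * (k1 + k2) + r)%N ->
  (r <= a)%N -> (k1 %/ p + k2 %/ p = (k1 + k2) %/ p)%N ->
  (a * (k1 + k2) + r %| m)%N.
Proof.
move=> _ m_gt0 [B B_perfect] p_prime _ pm apm _ cop pn ra floor_eq.
pose divisible (b : 'I_m) := p %| b.
apply: (divisor_from_counts (g := \sum_(b in B) divisible b)
                            (g' := \sum_(b in B) ~~ divisible b)
                            (prime_gt1 p_prime) m_gt0 pm apm cop pn ra).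
- by have [_ <-] := B_perfect; rewrite sum_predC_card.
- rewrite -(count_multiples_iota m.-1 (prime_gt0 p_prime)).
  rewrite (count_perfect_splitter B_perfect) -floor_eq -sum_if_nat.
  by apply: eq_bigr => b _; rewrite count_products_dvd.
Qed.
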